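(* Let $(Z,\delta)$ be a compact metric space. For each $n\ge1$, let $Z_n=X_n\cup\bigsqcup_{i\ge1}Y^{(i)}_n$ be a compact subset of $Z$, where $X_n$ is a non-empty compact set and $(Y^{(i)}_n)_{i\ge1}$ are pairwise disjoint, possibly empty, compact sets each intersecting $X_n$; choose $y^{(i)}_n\in Y^{(i)}_n\cap X_n$. Let $\mu_n$ be a finite Borel measure on $Z_n$, set $\gamma^{(i)}_n=\mu_n(Y^{(i)}_n\setminus X_n)$, $\mu^X_n=\mu_n(\cdot\cap X_n)$ and $\widetilde\mu_n=\mu^X_n+\sum_{i\ge1}\gamma^{(i)}_n\delta_{y^{(i)}_n}$. Suppose that $Z_n\to Z_\infty$ in the $\delta$-Hausdorff metric, that each $Z_n$ (with the metric induced by $\delta$) is geodesic, that $Z_\infty$ is 2-connected, that $\mu_n\to\mu_\infty$ in the $\delta$-Prokhorov metric and that $\mu_\infty$ is diffuse. If $\sup_{i\ge1}\mathrm{diam}(X_n\cap Y^{(i)}_n)\to0$ and $\liminf_n\mu_n(X_n)>0$, then $\sup_{i\ge1}\mathrm{diam}(Y^{(i)}_n)\to0$, and consequently (i) $X_n\to Z_\infty$ in the $\delta$-Hausdorff metric, and (ii) $\widetilde\mu_n\to\mu_\infty$ in the $\delta$-Prokhorov metric. Furthermore $\sup_{i\ge1}\gamma^{(i)}_n\to0$.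
   Context: A compact metric space $(X,d)$ is geodesic if for all $x,y\in X$ there is an isometry $p:[0,d(x,y)]\to X$ with $p(0)=x$, $p(d(x,y))=y$. A metric space $X$ is 2-connected if $X\setminus\{x_0\}$ is connected for every $x_0\in X$. A Borel measure is diffuse if every singleton has measure zero. Hausdorff and Prokhorov metrics are the usual ones in $(Z,\delta)$ (Prokhorov for finite measures: $\inf\{\epsilon>0:\mu(A)\le\mu'(A^\epsilon)+\epsilon,\ \mu'(A)\le\mu(A^\epsilon)+\epsilon\ \forall A\}$). *)

From Stdlib Require Import Reals List ClassicalDescription.
From Coquelicot Require Import Coquelicot.
Open Scope R_scope.
Set Implicit Arguments.

Section Defs.
Variable Z : Type.
Variable d : Z -> Z -> R.

Definition is_metric : Prop :=
  (forall x y, 0 <= d x y) /\ (forall x y, d x y = 0 <-> x = y) /\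
  (forall x y, d x y = d y x) /\ (forall x y z, d x z <= d x y + d y z).

Definition is_open (U : Z -> Prop) : Prop :=
  forall x, U x -> exists r, 0 < r /\ forall z, d x z < r -> U z.

Definition is_compact (K : Z -> Prop) : Prop :=
  forall (I : Type) (U : I -> Z -> Prop),
    (forall i, is_open (U i)) -> (forall z, K z -> exists i, U i z) ->
    exists l : list I, forall z, K z -> exists i, In i l /\ U i z.

Definition sigma_algebra (S : (Z -> Prop) -> Prop) : Prop :=
  S (fun _ => True) /\ (forall A, S A -> S (fun z => ~ A z)) /\
  (forall A : nat -> Z -> Prop, (forall k, S (A k)) -> S (fun z => exists k, A k z)).

Definition borel (A : Z -> Prop) : Prop :=
  forall S, sigma_algebra S -> (forall U, is_open U -> S U) -> S A.

(* finite (real-valued) Borel measure; its values on non-Borel sets are irrelevant *)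
Definition finite_borel_measure (m : (Z -> Prop) -> R) : Prop :=
  (forall A, borel A -> 0 <= m A) /\ m (fun _ => False) = 0 /\
  (forall A : nat -> Z -> Prop, (forall k, borel (A k)) ->
     (forall j k z, j <> k -> A j z -> A k z -> False) ->
     is_series (fun k => m (A k)) (m (fun z => exists k, A k z))).

Definition nbhd (A : Z -> Prop) (eps : R) : Z -> Prop :=
  fun z => exists a, A a /\ d z a < eps.

Definition hausdorff_cv (A : nat -> Z -> Prop) (B : Z -> Prop) : Prop :=
  forall eps, 0 < eps -> exists N, forall n, (N <= n)%nat ->
    (forall a, A n a -> nbhd B eps a) /\ (forall b, B b -> nbhd (A n) eps b).

Definition prokhorov_cv (mn : nat -> (Z -> Prop) -> R) (m : (Z -> Prop) -> R) : Prop :=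
  forall eps, 0 < eps -> exists N, forall n, (N <= n)%nat ->
    forall A, borel A ->
      mn n A <= m (nbhd A eps) + eps /\ m A <= mn n (nbhd A eps) + eps.

Definition geodesic (K : Z -> Prop) : Prop :=
  forall x y, K x -> K y ->
    exists p : R -> Z, p 0 = x /\ p (d x y) = y /\
      (forall s, 0 <= s <= d x y -> K (p s)) /\
      (forall s t, 0 <= s <= d x y -> 0 <= t <= d x y -> d (p s) (p t) = Rabs (s - t)).

Definition connected (S : Z -> Prop) : Prop :=
  ~ exists U V, is_open U /\ is_open V /\ (forall z, S z -> U z \/ V z) /\
      (exists z, S z /\ U z) /\ (exists z, S z /\ V z) /\
      (forall z, S z -> U z -> V z -> False).

Definition two_connected (S : Z -> Prop) : Prop :=
  forall x0, S x0 -> connected (fun z => S z /\ z <> x0).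

Definition diffuse (m : (Z -> Prop) -> R) : Prop :=
  forall x, m (fun z => z = x) = 0.

Definition diam_le (A : Z -> Prop) (r : R) : Prop :=
  forall a b, A a -> A b -> d a b <= r.

Definition dirac (y : Z) (A : Z -> Prop) : R :=
  if excluded_middle_informative (A y) then 1 else 0.

End Defs.

(* The heart of the matter is that the Y n i shrink. Otherwise some of them, of diameter
   bounded below, cluster at a point x0 of Zinf. Since muinf is diffuse while mu n (X n) stays
   bounded below, X n keeps a point b far from x0, and Y n i a point a far from x0 as well.
   As Zinf minus x0 is connected and Zinf is a Hausdorff limit of geodesic spaces, points of
   Zinf near a and b are joined by chains of arbitrarily small mesh avoiding a fixed ball
   around x0. Such a chain stays close to Y n i all along, because by Sierpinski's theorem a
   geodesic of Z n can only leave Y n i through X n ∩ Y n i, which is small and contains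
   y n i, hence lies near x0. So b is close to Y n i and, by the same argument, to x0: a
   contradiction. Once the Y n i are small, replacing them by the points y n i changes Z n
   and mu n little in the Hausdorff and Prokhorov metrics. *)

From Stdlib Require Import Reals List ClassicalDescription.
From Coquelicot Require Import Coquelicot.
From Stdlib Require Import Lra Lia Classical IndefiniteDescription FunctionalExtensionality PropExtensionality.
Open Scope R_scope.

Lemma set_ext {Z : Type} (A B : Z -> Prop) : (forall z, A z <-> B z) -> A = B.
Proof.
  intro H. apply functional_extensionality. intro z. apply propositional_extensionality, H.
Qed.

Lemma fold_max_ge {I : Type} (f : I -> nat) (l : list I) i :
  In i l -> (f i <= fold_right (fun j acc => Nat.max (f j) acc) 0%nat l)%nat.
Proof.
  induction l as [|a l IH]; simpl; [tauto|]. intros [->|H]; [lia|]. specialize (IH H). lia.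
Qed.

Lemma fold_min_pos {I : Type} (v : I -> R) (l : list I) :
  (forall i, In i l -> 0 < v i) -> 0 < fold_right (fun i acc => Rmin (v i) acc) 1 l.
Proof. induction l; simpl; intros H; [lra|]. apply Rmin_glb_lt; auto. Qed.

Lemma fold_min_le {I : Type} (v : I -> R) (l : list I) i :
  In i l -> fold_right (fun i acc => Rmin (v i) acc) 1 l <= v i.
Proof.
  induction l; simpl; [tauto|]. intros [->|H]; [apply Rmin_l|].
  eapply Rle_trans; [apply Rmin_r|auto].
Qed.

Lemma inv_INR_S_pos k : 0 < / INR (S k).
Proof. apply Rinv_0_lt_compat, lt_0_INR; lia. Qed.

Lemma inv_INR_S_le {j k : nat} : (j <= k)%nat -> / INR (S k) <= / INR (S j).
Proof. intro H. apply Rinv_le_contravar; [apply lt_0_INR; lia|]. apply le_INR; lia. Qed.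

Lemma inv_INR_S_lt {t : R} : 0 < t -> exists k, / INR (S k) < t.
Proof.
  intro Ht. destruct (archimed_cor1 t Ht) as [N [H1 H2]]. exists (pred N).
  replace (S (pred N)) with N by lia. exact H1.
Qed.

Definition closed_set {Z : Type} (d : Z -> Z -> R) (K : Z -> Prop) : Prop :=
  forall z, (forall e, 0 < e -> exists w, K w /\ d z w < e) -> K z.

Section Metric.
Context {Z : Type} {d : Z -> Z -> R} (Hm : is_metric d).

Lemma d_nonneg x y : 0 <= d x y. Proof. apply Hm. Qed.
Lemma d_refl x : d x x = 0. Proof. apply Hm; reflexivity. Qed.
Lemma d_sym x y : d x y = d y x. Proof. apply Hm. Qed.
Lemma d_tri x y z : d x z <= d x y + d y z. Proof. apply Hm. Qed.

Lemma d_pos {x y : Z} : x <> y -> 0 < d x y.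
Proof.
  intro Hxy. destruct (d_nonneg x y) as [H|H]; auto.
  exfalso. apply Hxy, Hm. auto.
Qed.

Lemma open_ball x r : is_open d (fun z => d x z < r).
Proof.
  intros z Hz. exists (r - d x z). split; [lra|]. intros w Hw.
  pose proof (d_tri x z w). lra.
Qed.

Lemma open_ball_compl x r : is_open d (fun z => r < d x z).
Proof.
  intros z Hz. exists (d x z - r). split; [lra|]. intros w Hw.
  pose proof (d_tri x w z). rewrite (d_sym w z) in H. lra.
Qed.

Lemma open_nbhd (A : Z -> Prop) e : is_open d (nbhd d A e).
Proof.
  intros z [a [Ha Hz]]. exists (e - d z a). split; [lra|]. intros w Hw.
  exists a. split; auto. pose proof (d_tri w z a). rewrite (d_sym w z) in H. lra.
Qed.

Lemma compact_closed {K : Z -> Prop} : is_compact d K -> closed_set d K.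
Proof.
  intros HK z Hz. apply NNPP; intro Hn.
  destruct (HK nat (fun k w => / INR (S k) < d z w)) as [l Hl].
  - intro k. apply open_ball_compl.
  - intros w Hw. assert (Hzw : z <> w) by (intros ->; auto).
    destruct (inv_INR_S_lt (d_pos Hzw)) as [k Hk]. exists k. exact Hk.
  - set (M := fold_right (fun j acc => Nat.max j acc) 0%nat l).
    destruct (Hz _ (inv_INR_S_pos M)) as [w [Kw Hw]].
    destruct (Hl w Kw) as [k [Hin Hk]].
    pose proof (fold_max_ge (fun j => j) l k Hin) as Hle. simpl in Hle. fold M in Hle.
    pose proof (inv_INR_S_le Hle). lra.
Qed.

Lemma compact_cluster {K : Z -> Prop} {Q : nat -> Z -> Prop} : is_compact d K ->
  (forall N, exists n u, (N <= n)%nat /\ Q n u /\ K u) ->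
  exists x, K x /\ forall r, 0 < r -> forall N, exists n u, (N <= n)%nat /\ Q n u /\ d x u < r.
Proof.
  intros HK HQ. apply NNPP; intro Hn.
  assert (Hx : forall x, K x -> exists r N, 0 < r /\
                 forall n u, (N <= n)%nat -> Q n u -> r <= d x u).
  { intros x Kx. apply NNPP; intro H2. apply Hn. exists x. split; auto.
    intros r Hr N. apply NNPP; intro H3. apply H2. exists r, N. split; auto.
    intros n u HN HQu. apply Rnot_lt_le. intro H4. apply H3. exists n, u. auto. }
  destruct (HK (Z * R * nat)%type
     (fun '(x, r, N) z => d x z < r /\ K x /\ 0 < r /\
        forall n u, (N <= n)%nat -> Q n u -> r <= d x u)) as [l Hl].
  - intros [[x r] N].
    destruct (classic (K x /\ 0 < r /\ forall n u, (N <= n)%nat -> Q n u -> r <= d x u)) as [Hc|Hc].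
    + intros z [Hz _]. destruct (open_ball x r z Hz) as [e [He Hw]].
      exists e. split; [exact He|]. intros w Hw'. auto.
    + intros z [_ Hz]. tauto.
  - intros z Kz. destruct (Hx z Kz) as [r [N [Hr HN]]]. exists (z, r, N). rewrite d_refl. auto.
  - set (M := fold_right (fun j acc => Nat.max (snd j) acc) 0%nat l).
    destruct (HQ M) as [n [u [HMn [Qu Ku]]]].
    destruct (Hl u Ku) as [[[x r] N] [Hin [H1 [_ [_ H2]]]]].
    pose proof (fold_max_ge snd l _ Hin) as Hle. simpl in Hle. fold M in Hle.
    specialize (H2 n u ltac:(lia) Qu). lra.
Qed.

End Metric.

Section Borel.
Context {Z : Type} {d : Z -> Z -> R}.

Lemma borel_open {U : Z -> Prop} : is_open d U -> borel d U.
Proof. intros HU S HS HSo. apply HSo, HU. Qed.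

Lemma borel_compl {A : Z -> Prop} : borel d A -> borel d (fun z => ~ A z).
Proof. intros HA S HS HSo. apply HS, HA; auto. Qed.

Lemma borel_cunion (A : nat -> Z -> Prop) :
  (forall k, borel d (A k)) -> borel d (fun z => exists k, A k z).
Proof. intros HA S HS HSo. apply HS. intro k. apply HA; auto. Qed.

Lemma borel_ext A B : borel d A -> (forall z, A z <-> B z) -> borel d B.
Proof. intros HA H. rewrite <- (set_ext A B H). auto. Qed.

Lemma borel_empty : borel d (fun _ => False).
Proof. apply borel_open. intros z []. Qed.

Lemma borel_const_and (P : Prop) {B : Z -> Prop} : borel d B -> borel d (fun z => P /\ B z).
Proof.
  intro HB. destruct (classic P).
  - apply borel_ext with B; tauto.
  - apply borel_ext with (fun _ => False); [apply borel_empty|tauto].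
Qed.

Lemma borel_union {A B : Z -> Prop} : borel d A -> borel d B -> borel d (fun z => A z \/ B z).
Proof.
  intros HA HB.
  apply borel_ext with (fun z => exists k, (match k with O => A | _ => B end) z).
  - apply borel_cunion. intros [|k]; auto.
  - intro z; split. intros [[|k] H]; auto. intros [H|H]; [exists O|exists 1%nat]; auto.
Qed.

Lemma borel_inter {A B : Z -> Prop} : borel d A -> borel d B -> borel d (fun z => A z /\ B z).
Proof.
  intros HA HB. apply borel_ext with (fun z => ~ (~ A z \/ ~ B z)).
  - apply borel_compl, borel_union; apply borel_compl; auto.
  - intro z; split; [|tauto]. intro H. split; apply NNPP; tauto.
Qed.

Lemma borel_cinter (A : nat -> Z -> Prop) :
  (forall k, borel d (A k)) -> borel d (fun z => forall k, A k z).
Proof.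
  intro HA. apply borel_ext with (fun z => ~ exists k, ~ A k z).
  - apply borel_compl, borel_cunion. intro k. apply borel_compl, HA.
  - intro z; split; [|firstorder]. intros H k. apply NNPP. eauto.
Qed.

Lemma borel_closed K : closed_set d K -> borel d K.
Proof.
  intro HK. apply borel_ext with (fun z => ~ ~ K z); [|intro; split; [apply NNPP|tauto]].
  apply borel_compl, borel_open. intros z Hz. apply NNPP; intro H. apply Hz, HK.
  intros e He. apply NNPP; intro H2. apply H. exists e. split; auto.
  intros w Hw Kw. apply H2. exists w; auto.
Qed.

Lemma borel_compact (Hm : is_metric d) {K : Z -> Prop} : is_compact d K -> borel d K.
Proof. intro; apply borel_closed, (compact_closed Hm); auto. Qed.

End Borel.

Lemma is_series_finite (a : nat -> R) N :
  (forall k, (N < k)%nat -> a k = 0) -> is_series a (sum_n a N).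
Proof.
  intro H. change (is_lim_seq (sum_n a) (Finite (sum_n a N))).
  apply is_lim_seq_ext_loc with (fun _ => sum_n a N); [|apply is_lim_seq_const].
  exists N. intros n Hn. induction Hn as [|n Hn IH]; auto.
  rewrite sum_Sn, <- IH, H by lia. unfold plus; simpl. symmetry. apply Rplus_0_r.
Qed.

Section Measure.
Context {Z : Type} {d : Z -> Z -> R} {m : (Z -> Prop) -> R}.
Hypothesis Hmu : finite_borel_measure d m.

Lemma measure_ext A B : (forall z, A z <-> B z) -> m A = m B.
Proof. intro H. rewrite (set_ext A B H). reflexivity. Qed.

Lemma measure_nonneg {A : Z -> Prop} : borel d A -> 0 <= m A.
Proof. apply Hmu. Qed.

Lemma measure_empty A : (forall z, ~ A z) -> m A = 0.
Proof.
  intro H. destruct Hmu as [_ [H0 _]]. rewrite <- H0. apply measure_ext. intro z; split; [apply H|intros []].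
Qed.

Lemma measure_cunion (A : nat -> Z -> Prop) : (forall k, borel d (A k)) ->
  (forall j k z, j <> k -> A j z -> A k z -> False) ->
  is_series (fun k => m (A k)) (m (fun z => exists k, A k z)).
Proof. apply Hmu. Qed.

Lemma measure_union A B : borel d A -> borel d B -> (forall z, A z -> B z -> False) ->
  m (fun z => A z \/ B z) = m A + m B.
Proof.
  intros HA HB HAB.
  set (E := fun k => match k with O => A | 1%nat => B | _ => fun _ : Z => False end).
  assert (H1 : is_series (fun k => m (E k)) (m (fun z => exists k, E k z))).
  { apply measure_cunion.
    - intros [|[|k]]; simpl; auto. apply borel_empty.
    - intros [|[|j]] [|[|k]] z Hjk; simpl; try tauto; try lia; eauto. }
  assert (H2 : is_series (fun k => m (E k)) (sum_n (fun k => m (E k)) 1)).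
  { apply is_series_finite. intros [|[|k]] Hk; try lia. apply measure_empty. auto. }
  apply is_series_unique in H1. apply is_series_unique in H2.
  rewrite H1, sum_Sn, sum_O in H2. unfold plus in H2; simpl in H2. rewrite <- H2.
  apply measure_ext. intro z; split.
  - intros [H|H]; [exists O|exists 1%nat]; auto.
  - intros [[|[|k]] H]; simpl in H; tauto.
Qed.

Lemma measure_diff {A B : Z -> Prop} : borel d A -> borel d B ->
  m B = m (fun z => B z /\ A z) + m (fun z => B z /\ ~ A z).
Proof.
  intros HA HB. rewrite <- measure_union.
  - apply measure_ext. intro z. destruct (classic (A z)); tauto.
  - apply borel_inter; auto.
  - apply borel_inter; [|apply borel_compl]; auto.
  - tauto.
Qed.

Lemma measure_mono A B : borel d A -> borel d B -> (forall z, A z -> B z) -> m A <= m B.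
Proof.
  intros HA HB HAB. rewrite (measure_diff HA HB).
  rewrite (measure_ext (fun z => B z /\ A z) A) by (intro z; split; [tauto|auto]).
  pose proof (measure_nonneg (borel_inter HB (borel_compl HA))). lra.
Qed.

Lemma measure_restrict A C : borel d A -> borel d C -> m (fun z => ~ C z) = 0 ->
  m A = m (fun z => A z /\ C z).
Proof.
  intros HA HC H0. rewrite (measure_diff HC HA).
  assert (m (fun z => A z /\ ~ C z) <= m (fun z => ~ C z)).
  { apply measure_mono; [apply borel_inter|apply borel_compl|]; try apply borel_compl; tauto. }
  pose proof (measure_nonneg (borel_inter HA (borel_compl HC))). lra.
Qed.

Lemma measure_annuli_series (B : nat -> Z -> Prop) :
  (forall k, borel d (B k)) -> (forall k z, B (S k) z -> B k z) ->
  is_series (fun k => m (match k with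
                         | O => fun z => forall j, B j z
                         | S k => fun z => B k z /\ ~ B (S k) z end)) (m (B O)).
Proof.
  intros HB Hdec.
  assert (Hmon : forall j k z, (j <= k)%nat -> B k z -> B j z).
  { intros j k z Hjk. induction Hjk; auto. }
  erewrite measure_ext; [apply measure_cunion|].
  - intros [|k]; [apply borel_cinter, HB|apply borel_inter, borel_compl; apply HB].
  - intros [|j] [|k] z Hjk; try lia.
    + intros H1 [_ H2]. apply H2, H1.
    + intros [_ H1] H2. apply H1, H2.
    + intros [Hj Nj] [Hk Nk]. destruct (Nat.lt_total j k) as [H|[H|H]]; [|lia|].
      * apply Nj, (Hmon _ k); auto.
      * apply Nk, (Hmon _ j); auto.
  - intro z; split.
    + intro H0. destruct (classic (forall j, B j z)) as [H|H]; [exists O; exact H|].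
      apply not_all_ex_not in H. destruct H as [k Hk].
      assert (Hgen : forall j, ~ B j z -> exists k, B k z /\ ~ B (S k) z).
      { induction j as [|j IH]; intro Hj; [tauto|].
        destruct (classic (B j z)); [exists j; split; auto|auto]. }
      destruct (Hgen k Hk) as [j Hj]. exists (S j). exact Hj.
    + intros [[|k] H]; [apply H|apply (Hmon O k), H; lia].
Qed.

Lemma measure_decreasing_cv (B : nat -> Z -> Prop) :
  (forall k, borel d (B k)) -> (forall k z, B (S k) z -> B k z) ->
  is_lim_seq (fun k => m (B k)) (m (fun z => forall k, B k z)).
Proof.
  intros HB Hdec. pose proof (measure_annuli_series B HB Hdec) as HE.
  set (E := fun k => m (match k with
                        | O => fun z => forall j, B j z
                        | S k => fun z => B k z /\ ~ B (S k) z end)) in HE.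
  set (Binf := fun z => forall k, B k z).
  assert (Hsum : forall K, sum_n E K + m (B K) = m Binf + m (B O)).
  { induction K as [|K IH]; [rewrite sum_O; reflexivity|].
    rewrite sum_Sn. unfold plus; simpl. rewrite <- IH.
    rewrite (measure_diff (HB (S K)) (HB K)).
    rewrite (measure_ext (fun z => B K z /\ B (S K) z) (B (S K))) by (intro z; split; [tauto|auto]).
    unfold E. ring. }
  apply is_lim_seq_ext with (fun K => m Binf + m (B O) - sum_n E K).
  - intro K. rewrite <- (Hsum K). ring.
  - pose proof (is_lim_seq_minus' _ _ _ _ (is_lim_seq_const (m Binf + m (B O))) HE) as H.
    replace (m Binf + m (B O) - m (B O)) with (m Binf) in H by ring. exact H.
Qed.

Lemma small_ball_at (Hm : is_metric d) x : m (fun z => z = x) = 0 ->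
  forall tau, 0 < tau -> exists r, 0 < r /\ m (fun z => d x z < r) < tau.
Proof.
  intros Hx tau Htau.
  set (B := fun k z => d x z < / INR (S k)).
  assert (Hlim : is_lim_seq (fun k => m (B k)) 0).
  { rewrite <- Hx, (measure_ext (fun z => z = x) (fun z => forall k, B k z)).
    - apply measure_decreasing_cv.
      + intro k. apply borel_open, (open_ball Hm).
      + intros k z. unfold B. pose proof (@inv_INR_S_le k (S k) ltac:(lia)). lra.
    - intro z; split.
      + intros -> k. unfold B. rewrite (d_refl Hm). apply inv_INR_S_pos.
      + intro H. apply NNPP; intro Hzx. assert (Hxz : x <> z) by auto.
        destruct (inv_INR_S_lt (d_pos Hm Hxz)) as [k Hk]. specialize (H k). unfold B in H. lra. }
  apply is_lim_seq_spec in Hlim. destruct (Hlim (mkposreal _ Htau)) as [N HN].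
  exists (/ INR (S N)). split; [apply inv_INR_S_pos|].
  specialize (HN N (le_n _)). simpl in HN. apply Rabs_lt_between in HN. unfold B in HN. lra.
Qed.

Lemma small_ball_uniform (Hm : is_metric d) : is_compact d (fun _ => True) -> diffuse m ->
  forall tau, 0 < tau -> exists r, 0 < r /\ forall x, m (fun z => d x z < r) < tau.
Proof.
  intros HZ Hdf tau Htau. apply NNPP; intro Hn.
  assert (HQ : forall N, exists n u, (N <= n)%nat /\ tau <= m (fun z => d u z < / INR (S n)) /\ True).
  { intro N. exists N. apply NNPP; intro H. apply Hn. exists (/ INR (S N)).
    split; [apply inv_INR_S_pos|]. intro x. apply Rnot_le_lt. intro H2. apply H. eauto. }
  destruct (compact_cluster Hm HZ HQ) as [x [_ Hx]].
  destruct (small_ball_at Hm x (Hdf x) tau Htau) as [r0 [Hr0 Hm0]].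
  destruct (@inv_INR_S_lt (r0/2) ltac:(lra)) as [N HN].
  destruct (Hx (r0/2) ltac:(lra) N) as [n [u [HNn [Hq Hd]]]].
  assert (m (fun z => d u z < / INR (S n)) <= m (fun z => d x z < r0)).
  { apply measure_mono; try apply borel_open, (open_ball Hm).
    intros z Hz. pose proof (d_tri Hm x u z). pose proof (inv_INR_S_le HNn). lra. }
  lra.
Qed.

End Measure.

(** * Sierpinski's theorem on an interval *)

Definition closedR (F : R -> Prop) : Prop :=
  forall t, (forall e, 0 < e -> exists s, F s /\ Rabs (s - t) < e) -> F t.

Lemma closedR_max F lo hi : closedR F -> (exists s, F s /\ lo <= s <= hi) ->
  exists t, F t /\ lo <= t <= hi /\ forall s, F s -> lo <= s <= hi -> s <= t.
Proof.
  intros HF Hne.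
  set (E := fun s => F s /\ lo <= s <= hi).
  assert (Hb : bound E) by (exists hi; intros s [_ Hs]; lra).
  destruct (completeness E Hb Hne) as [t [Hub Hlub]].
  destruct Hne as [s0 [Fs0 Hs0]].
  assert (Hs0t : s0 <= t) by (apply Hub; split; auto).
  assert (Hthi : t <= hi) by (apply Hlub; intros s [_ Hs]; lra).
  exists t. split; [|split; [lra|intros s Fs Hs; apply Hub; split; auto]].
  apply HF. intros e He. apply NNPP; intro Hn.
  assert (t <= t - e); [|lra].
  apply Hlub. intros s [Fs Hs]. apply Rnot_lt_le. intro H. apply Hn. exists s. split; auto.
  assert (s <= t) by (apply Hub; split; auto). rewrite Rabs_left1; lra.
Qed.

Lemma closedR_min F lo hi : closedR F -> (exists s, F s /\ lo <= s <= hi) ->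
  exists t, F t /\ lo <= t <= hi /\ forall s, F s -> lo <= s <= hi -> t <= s.
Proof.
  intros HF [s0 [Fs0 Hs0]].
  destruct (closedR_max (fun s => F (- s)) (- hi) (- lo)) as [t [Ft [Ht Hmax]]].
  - intros t Ht. apply HF. intros e He. destruct (Ht e He) as [s [Fs Hs]].
    exists (- s). split; auto. rewrite <- Rabs_Ropp. replace (- (- s - - t)) with (s - t) by ring. auto.
  - exists (- s0). rewrite Ropp_involutive. split; [auto|lra].
  - exists (- t). split; [auto|split; [lra|]]. intros s Fs Hs.
    assert (- s <= t); [|lra]. apply Hmax; [rewrite Ropp_involutive; auto|lra].
Qed.

Lemma nested_intervals (A B : nat -> R) :
  (forall k, A k <= A (S k)) -> (forall k, B (S k) <= B k) -> (forall k, A k <= B k) ->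
  exists t, forall k, A k <= t <= B k.
Proof.
  intros HA HB HAB.
  assert (HAmon : forall j k, (j <= k)%nat -> A j <= A k).
  { intros j k H. induction H; [lra|]. specialize (HA m). lra. }
  assert (HBmon : forall j k, (j <= k)%nat -> B k <= B j).
  { intros j k H. induction H; [lra|]. specialize (HB m). lra. }
  assert (HAB' : forall j k, A j <= B k).
  { intros j k. destruct (Nat.le_ge_cases j k) as [H|H].
    - specialize (HAmon _ _ H). specialize (HAB k). lra.
    - specialize (HBmon _ _ H). specialize (HAB j). lra. }
  set (E := fun x => exists k, x = A k).
  destruct (completeness E) as [t [Hub Hlub]].
  - exists (B O). intros x [k ->]. apply HAB'.
  - exists (A O), O. reflexivity.
  - exists t. intro k. split.
    + apply Hub. exists k. reflexivity.
    + apply Hlub. intros x [j ->]. apply HAB'.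
Qed.

Section Sierpinski.
Variable F : nat -> R -> Prop.
Variables a0 b0 : R.
Hypothesis Hcl : forall k, closedR (F k).
Hypothesis Hcov : forall t, a0 <= t <= b0 -> exists k, F k t.
Hypothesis Hdisj : forall j k t, j <> k -> F j t -> F k t -> False.

Lemma two_pieces_inside a b p q : a0 <= a -> a < b -> b <= b0 -> F p a -> F q b -> p <> q ->
  exists u v r s, a < u < b /\ a < v < b /\ F r u /\ F s v /\ r <> s.
Proof.
  intros Ha Hab Hb Fp Fq Hpq.
  destruct (Hcov ((a + b) / 2)) as [r Fr]; [lra|].
  destruct (classic (exists v s, a < v < b /\ F s v /\ r <> s)) as [[v [s [Hv [Fs Hrs]]]]|Hn].
  { exists ((a+b)/2), v, r, s. repeat split; auto; lra. }
  exfalso.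
  assert (Hall : forall t, a < t < b -> F r t).
  { intros t Ht. destruct (Hcov t) as [k Fk]; [lra|].
    destruct (classic (r = k)) as [->|Hrk]; auto. exfalso. apply Hn. exists t, k. auto. }
  assert (Hend : forall c, a <= c <= b -> F r c).
  { intros c Hc. apply Hcl. intros e He.
    set (h := Rmin (e/2) ((b - a)/4)).
    assert (0 < h) by (apply Rmin_glb_lt; lra).
    assert (h <= e/2) by apply Rmin_l. assert (h <= (b - a)/4) by apply Rmin_r.
    destruct (Rle_lt_dec c ((a + b) / 2)).
    - exists (c + h). split; [apply Hall; lra|rewrite Rabs_right; lra].
    - exists (c - h). split; [apply Hall; lra|rewrite Rabs_left; lra]. }
  destruct (classic (r = p)) as [<-|Hrp].
  - exact (Hdisj _ _ _ Hpq (Hend b ltac:(lra)) Fq).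
  - exact (Hdisj _ _ _ Hrp (Hend a ltac:(lra)) Fp).
Qed.

Lemma shrink_avoiding a b p q k : a0 <= a -> a < b -> b <= b0 -> F p a -> F q b -> p <> q ->
  exists a' b', a < a' /\ a' < b' /\ b' < b /\ (exists p' q', p' <> q' /\ F p' a' /\ F q' b') /\
    forall t, a' < t < b' -> ~ F k t.
Proof.
  intros Ha Hab Hb Fp Fq Hpq.
  assert (Hred : exists a1 b1, a <= a1 /\ a1 < b1 /\ b1 <= b /\
      (exists p' q', p' <> q' /\ F p' a1 /\ F q' b1) /\ forall t, a1 < t < b1 -> ~ F k t).
  { destruct (classic (exists w, a < w < b /\ F k w)) as [[w [Hw Fw]]|Hn].
    2:{ exists a, b. repeat split; try lra. exists p, q. auto. intros t Ht Ft. eauto. }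
    destruct (classic (k = p)) as [->|Hkp].
    - destruct (closedR_max (F p) w b (Hcl p)) as [a1 [Fa1 [Ha1 Hmax]]];
        [exists w; split; auto; lra|].
      destruct (closedR_min (F q) a1 b (Hcl q)) as [b1 [Fb1 [Hb1 Hmin]]];
        [exists b; split; auto; lra|].
      assert (a1 <> b1) by (intros <-; eauto).
      exists a1, b1. repeat split; try lra. exists p, q. auto.
      intros t Ht Ft. assert (t <= a1) by (apply Hmax; auto; lra). lra.
    - destruct (closedR_max (F p) a w (Hcl p)) as [a1 [Fa1 [Ha1 Hmax]]];
        [exists a; split; auto; lra|].
      destruct (closedR_min (F k) a1 w (Hcl k)) as [b1 [Fb1 [Hb1 Hmin]]];
        [exists w; split; auto; lra|].
      assert (a1 <> b1) by (intros <-; eauto).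
      exists a1, b1. repeat split; try lra. exists p, k. auto.
      intros t Ht Ft. assert (b1 <= t) by (apply Hmin; auto; lra). lra. }
  destruct Hred as [a1 [b1 [Ha1 [Hab1 [Hb1 [[p' [q' [Hpq' [Fp' Fq']]]] Hk]]]]]].
  destruct (two_pieces_inside a1 b1 p' q') as [u [v [r [s [Hu [Hv [Fr [Fs Hrs]]]]]]]];
    auto; try lra.
  destruct (Rtotal_order u v) as [Huv|[<-|Huv]].
  - exists u, v. repeat split; try lra. exists r, s; auto. intros t Ht. apply Hk. lra.
  - exfalso. eauto.
  - exists v, u. repeat split; try lra. exists s, r; auto. intros t Ht. apply Hk. lra.
Qed.

Definition separated_interval := {ab : R * R | a0 <= fst ab /\ fst ab < snd ab /\ snd ab <= b0 /\
   exists p q, p <> q /\ F p (fst ab) /\ F q (snd ab)}.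

Lemma separated_interval_shrink (k : nat) (s : separated_interval) :
  exists s' : separated_interval,
  fst (proj1_sig s) < fst (proj1_sig s') /\ snd (proj1_sig s') < snd (proj1_sig s) /\
  forall t, fst (proj1_sig s') < t < snd (proj1_sig s') -> ~ F k t.
Proof.
  destruct s as [[a b] [Ha [Hab [Hb [p [q [Hpq [Fp Fq]]]]]]]]. simpl in *.
  destruct (shrink_avoiding a b p q k Ha Hab Hb Fp Fq Hpq) as [a' [b' [H1 [H2 [H3 [H4 H5]]]]]].
  unshelve eexists (exist _ (a', b') _); simpl; repeat split; auto; lra.
Qed.

(* Nested intervals, the k-th avoiding F k, shrink to a point lying in no F k. *)
Theorem sierpinski_interval p q : a0 < b0 -> F p a0 -> F q b0 -> p <> q -> False.
Proof.
  intros Hab Fp Fq Hpq.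
  unshelve epose (s0 := exist _ (a0, b0) _ : separated_interval);
    [simpl; repeat split; try lra; eauto|].
  set (next := fun k s => proj1_sig (constructive_indefinite_description _
                                       (separated_interval_shrink k s))).
  assert (Hnext : forall k s, fst (proj1_sig s) < fst (proj1_sig (next k s)) /\
      snd (proj1_sig (next k s)) < snd (proj1_sig s) /\
      forall t, fst (proj1_sig (next k s)) < t < snd (proj1_sig (next k s)) -> ~ F k t).
  { intros k s. unfold next. destruct constructive_indefinite_description as [s' Hs']. exact Hs'. }
  set (sq := nat_rect (fun _ => separated_interval) s0 next).
  set (A := fun k => fst (proj1_sig (sq k))). set (B := fun k => snd (proj1_sig (sq k))).
  assert (HA : forall k, A k < A (S k)) by (intro k; apply (Hnext k (sq k))).
  assert (HB : forall k, B (S k) < B k) by (intro k; apply (Hnext k (sq k))).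
  assert (Hav : forall k t, A (S k) < t < B (S k) -> ~ F k t) by (intro k; apply (Hnext k (sq k))).
  destruct (nested_intervals A B) as [t Ht].
  - intro k. left. apply HA.
  - intro k. left. apply HB.
  - intro k. unfold A, B. destruct (sq k) as [ab Hab']. simpl. lra.
  - destruct (Hcov t) as [k Fk]; [apply (Ht O)|].
    apply (Hav k t); auto. specialize (HA (S k)). specialize (HB (S k)). specialize (Ht (S (S k))).
    lra.
Qed.

End Sierpinski.

(** * Geodesics leaving a piece *)

Section GeodesicExit.
Context {Z : Type} {d : Z -> Z -> R}.
Variable X : Z -> Prop.
Variable Y : nat -> Z -> Prop.
Hypothesis HXcl : closed_set d X.
Hypothesis HYcl : forall i, closed_set d (Y i).
Hypothesis HYdisj : forall i j z, i <> j -> Y i z -> Y j z -> False.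
Variable g : R -> Z.
Variable L : R.
Hypothesis Hiso : forall s t, 0 <= s <= L -> 0 <= t <= L -> d (g s) (g t) = Rabs (s - t).

Lemma closedR_path_preimage K lo hi : closed_set d K -> 0 <= lo -> hi <= L ->
  closedR (fun t => lo <= t <= hi /\ K (g t)).
Proof.
  intros HK Hlo Hhi t Ht.
  assert (Hint : lo <= t <= hi).
  { split; apply Rnot_lt_le; intro H.
    - destruct (Ht (lo - t)) as [s [[Hs _] Hs']]; [lra|]. rewrite Rabs_right in Hs'; lra.
    - destruct (Ht (t - hi)) as [s [[Hs _] Hs']]; [lra|]. rewrite Rabs_left in Hs'; lra. }
  split; auto. apply HK. intros e He. destruct (Ht e He) as [s [[Hs Ks] Hs']].
  exists (g s). split; auto. rewrite Hiso by lra. rewrite Rabs_minus_sym. auto.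
Qed.

(* Off X the path runs through the disjoint closed sets Y j, so by Sierpinski it cannot
   switch from one to another. *)
Lemma path_off_X_stays_in_Y i s t : 0 <= s <= t -> t <= L ->
  (forall u, s <= u <= t -> exists j, Y j (g u)) -> Y i (g s) -> Y i (g t).
Proof.
  intros Hs Ht Hcov Ys. destruct (Req_dec s t) as [<-|Hst]; auto.
  apply NNPP; intro Nt. destruct (Hcov t) as [j Yj]; [lra|].
  assert (Hij : i <> j) by (intros ->; auto).
  apply (sierpinski_interval (fun k u => s <= u <= t /\ Y k (g u)) s t) with i j; auto; try lra.
  - intro k. apply closedR_path_preimage; auto; lra.
  - intros u Hu. destruct (Hcov u Hu) as [k Hk]. eauto.
  - intros k l u Hkl [_ H1] [_ H2]. eauto.
  - split; [lra|auto].
  - split; [lra|auto].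
Qed.

(* At the first time the path meets X it is still in Y i. *)
Lemma path_exit_through_X i : 0 <= L -> Y i (g 0) -> ~ Y i (g L) ->
  (forall u, 0 <= u <= L -> X (g u) \/ exists j, Y j (g u)) ->
  exists t, 0 <= t <= L /\ X (g t) /\ Y i (g t).
Proof.
  intros HL Y0 NL Hpath.
  destruct (classic (exists t, (0 <= t <= L /\ X (g t)) /\ 0 <= t <= L)) as [Hne|Hno].
  2:{ exfalso. apply NL, (path_off_X_stays_in_Y i 0 L); try lra; auto.
      intros u Hu. destruct (Hpath u Hu) as [Xu|Yu]; [exfalso; eauto|auto]. }
  destruct (closedR_min _ 0 L (closedR_path_preimage X 0 L HXcl (Rle_refl 0) (Rle_refl L)) Hne)
    as [t1 [[Ht1 Xt1] [_ Hmin]]].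
  exists t1. repeat split; try lra; auto.
  destruct (Req_dec t1 0) as [->|Ht1pos]; auto.
  apply HYcl. intros e He.
  set (u := t1 - Rmin (e/2) t1).
  assert (0 < Rmin (e/2) t1) by (apply Rmin_glb_lt; lra).
  pose proof (Rmin_l (e/2) t1). pose proof (Rmin_r (e/2) t1).
  exists (g u). split.
  - apply (path_off_X_stays_in_Y i 0 u); unfold u; try lra; auto.
    intros v Hv. destruct (Hpath v ltac:(lra)) as [Xv|Yv]; auto.
    assert (t1 <= v) by (apply Hmin; split; auto; lra). lra.
  - rewrite Hiso by (unfold u; lra). unfold u. rewrite Rabs_right; lra.
Qed.

End GeodesicExit.

Lemma geodesic_exit {Z : Type} {d : Z -> Z -> R} (Hm : is_metric d) X (Y : nat -> Z -> Prop) :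
  closed_set d X -> (forall i, closed_set d (Y i)) ->
  (forall i j z, i <> j -> Y i z -> Y j z -> False) ->
  geodesic d (fun z => X z \/ exists j, Y j z) ->
  forall i w b, Y i w -> (X b \/ exists j, Y j b) -> ~ Y i b ->
  exists pt, X pt /\ Y i pt /\ d w b = d w pt + d pt b.
Proof.
  intros HXcl HYcl HYdisj Hgeo i w b Yw Zb Nb.
  destruct (Hgeo w b) as [g [Hg0 [HgL [HgZ Hgi]]]]; [right; exists i; auto|auto|].
  destruct (path_exit_through_X X Y HXcl HYcl HYdisj g (d w b) Hgi i (d_nonneg Hm w b))
    as [t [Ht [Xt Yt]]]; [rewrite Hg0; exact Yw|rewrite HgL; exact Nb|exact HgZ|].
  exists (g t). split; [exact Xt|split; [exact Yt|]].
  assert (E1 : d (g 0) (g t) = t) by (rewrite Hgi by lra; rewrite Rabs_left1; lra).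
  assert (E2 : d (g t) (g (d w b)) = d w b - t) by (rewrite Hgi by lra; rewrite Rabs_left1; lra).
  rewrite Hg0 in E1. rewrite HgL in E2. lra.
Qed.

(** * Chains *)

Definition chain_in {Z : Type} (d : Z -> Z -> R) (P : Z -> Prop) (e : R) (p q : Z) : Prop :=
  exists m (f : nat -> Z), f O = p /\ f m = q /\ (forall j, (j <= m)%nat -> P (f j)) /\
    (forall j, (j < m)%nat -> d (f j) (f (S j)) < e).

(* The substitute for "K is geodesic" that survives Hausdorff limits. *)
Definition chain_geodesic {Z : Type} (d : Z -> Z -> R) (K : Z -> Prop) : Prop :=
  forall z w r e, K z -> K w -> d z w < r -> 0 < e ->
    chain_in d (fun u => K u /\ d z u < r + e) e z w.

Section Chains.
Context {Z : Type} {d : Z -> Z -> R} (Hm : is_metric d).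

Lemma chain_mono (P P' : Z -> Prop) e e' p q : (forall z, P z -> P' z) -> e <= e' ->
  chain_in d P e p q -> chain_in d P' e' p q.
Proof.
  intros HP He [m [f [H0 [H1 [H2 H3]]]]]. exists m, f. repeat split; auto.
  intros j Hj. specialize (H3 j Hj). lra.
Qed.

Lemma chain_endpoints {P : Z -> Prop} {e p q} : chain_in d P e p q -> P p /\ P q.
Proof.
  intros [m [f [F0 [Fm [FP _]]]]]. rewrite <- F0, <- Fm. split; apply FP; lia.
Qed.

Lemma chain_step (P : Z -> Prop) e p q : P p -> P q -> d p q < e -> chain_in d P e p q.
Proof.
  intros Pp Pq Hpq. exists 1%nat, (fun j => match j with O => p | _ => q end).
  repeat split; auto.
  - intros [|j] _; auto.
  - intros [|j] Hj; [exact Hpq|lia].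
Qed.

Lemma chain_rev P e p q : chain_in d P e p q -> chain_in d P e q p.
Proof.
  intros [m [f [H0 [H1 [H2 H3]]]]]. exists m, (fun j => f (m - j)%nat).
  repeat split.
  - rewrite Nat.sub_0_r; auto.
  - rewrite Nat.sub_diag; auto.
  - intros j Hj. apply H2; lia.
  - intros j Hj. replace (m - j)%nat with (S (m - S j)) by lia. rewrite (d_sym Hm). apply H3. lia.
Qed.

Lemma chain_app P e p q r : chain_in d P e p q -> chain_in d P e q r -> chain_in d P e p r.
Proof.
  intros [m1 [f [F0 [F1 [F2 F3]]]]] [m2 [g [G0 [G1 [G2 G3]]]]].
  exists (m1 + m2)%nat, (fun j => if Nat.leb j m1 then f j else g (j - m1)%nat).
  split; [|split; [|split]].
  - simpl. auto.
  - destruct (Nat.leb_spec (m1 + m2) m1).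
    + replace m2 with O in * by lia. rewrite Nat.add_0_r, F1, <- G1, G0. reflexivity.
    + replace (m1 + m2 - m1)%nat with m2 by lia. auto.
  - intros j Hj. destruct (Nat.leb_spec j m1); [apply F2; lia|apply G2; lia].
  - intros j Hj. destruct (Nat.leb_spec j m1); destruct (Nat.leb_spec (S j) m1).
    + apply F3; lia.
    + replace j with m1 in * by lia. replace (S m1 - m1)%nat with 1%nat by lia.
      rewrite F1, <- G0. apply G3. lia.
    + lia.
    + replace (S j - m1)%nat with (S (j - m1)) by lia. apply G3. lia.
Qed.

Lemma chain_invariant (P Q : Z -> Prop) e p q :
  (forall u u', P u -> P u' -> d u u' < e -> Q u -> Q u') ->
  chain_in d P e p q -> Q p -> Q q.
Proof.
  intros Hstep [m [f [F0 [Fm [FP Fe]]]]] Qp. rewrite <- Fm.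
  assert (H : forall j, (j <= m)%nat -> Q (f j)).
  { induction j as [|j IH]; intro Hj; [rewrite F0; exact Qp|].
    apply (Hstep (f j)); auto with arith. }
  auto.
Qed.

Lemma geodesic_chain K x y e : geodesic d K -> K x -> K y -> 0 < e ->
  chain_in d (fun u => K u /\ d x u <= d x y) e x y.
Proof.
  intros HK Kx Ky He.
  destruct (HK x y Kx Ky) as [g [Hg0 [HgL [HgK Hgi]]]].
  set (L := d x y) in *.
  assert (HL0 : 0 <= L) by apply (d_nonneg Hm).
  destruct (archimed_cor1 (e / (L + 1))) as [M [HM HM0]]; [apply Rdiv_lt_0_compat; lra|].
  assert (HMpos : 0 < INR M) by (apply lt_0_INR; lia).
  assert (Hstep : L / INR M < e).
  { assert (L / INR M <= (L + 1) / INR M).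
    { apply Rmult_le_compat_r; [left; apply Rinv_0_lt_compat|]; lra. }
    assert ((L + 1) / INR M < (L + 1) * (e / (L + 1))).
    { unfold Rdiv at 1. apply Rmult_lt_compat_l; lra. }
    replace ((L + 1) * (e / (L + 1))) with e in H0 by (field; lra). lra. }
  set (s := fun j : nat => L * INR j / INR M).
  assert (Hs : forall j, (j <= M)%nat -> 0 <= s j <= L).
  { intros j Hj. unfold s. pose proof (pos_INR j). pose proof (le_INR _ _ Hj).
    split; [apply Rmult_le_pos; [apply Rmult_le_pos; lra|left; apply Rinv_0_lt_compat; lra]|].
    apply (Rmult_le_reg_r (INR M)); auto. unfold Rdiv. rewrite Rmult_assoc, Rinv_l by lra. nra. }
  exists M, (fun j => g (s j)). split; [|split; [|split]].
  - unfold s. rewrite Rmult_0_r. unfold Rdiv. rewrite Rmult_0_l. exact Hg0.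
  - unfold s. replace (L * INR M / INR M) with L by (field; lra). exact HgL.
  - intros j Hj. pose proof (Hs j Hj). split; [apply HgK; auto|].
    rewrite <- Hg0 at 1. rewrite Hgi by lra. rewrite Rabs_left1; lra.
  - intros j Hj. rewrite Hgi by (apply Hs; lia). unfold s. rewrite S_INR.
    replace (L * INR j / INR M - L * (INR j + 1) / INR M) with (- (L / INR M)) by (field; lra).
    rewrite Rabs_Ropp, Rabs_right; [lra|]. apply Rle_ge, Rdiv_le_0_compat; lra.
Qed.

Lemma chain_shadow (P Q : Z -> Prop) e eta p q : chain_in d P e p q ->
  (forall u, P u -> exists v, Q v /\ d u v < eta) ->
  exists p' q', d p p' < eta /\ d q q' < eta /\
    chain_in d (fun v => Q v /\ exists u, P u /\ d u v < eta) (e + 2 * eta) p' q'.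
Proof.
  intros [m [f [F0 [Fm [FP Fe]]]]] Hsh.
  assert (Hsel : forall j, exists v, (j <= m)%nat -> Q v /\ d (f j) v < eta).
  { intro j. destruct (Compare_dec.le_lt_dec j m) as [Hj|Hj].
    - destruct (Hsh (f j) (FP j Hj)) as [v Hv]. eauto.
    - exists p. lia. }
  destruct (functional_choice _ Hsel) as [G HG].
  exists (G O), (G m). rewrite <- F0, <- Fm.
  split; [apply HG; lia|split; [apply HG; lia|]].
  exists m, G. split; [reflexivity|split; [reflexivity|split]].
  - intros j Hj. split; [apply HG, Hj|]. exists (f j). split; [apply FP|apply HG]; auto.
  - intros j Hj. destruct (HG j ltac:(lia)) as [_ H1]. destruct (HG (S j) Hj) as [_ H2].
    specialize (Fe j Hj). pose proof (d_tri Hm (G j) (f j) (G (S j))).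
    pose proof (d_tri Hm (f j) (f (S j)) (G (S j))). rewrite (d_sym Hm (G j) (f j)) in H. lra.
Qed.

Lemma hausdorff_limit_chain_geodesic (Zn : nat -> Z -> Prop) Zinf :
  (forall n, geodesic d (Zn n)) -> hausdorff_cv d Zn Zinf -> chain_geodesic d Zinf.
Proof.
  intros Hgeod HH z w r e Zz Zw Hzw He.
  set (eta := e / 4).
  destruct (HH eta ltac:(unfold eta; lra)) as [N HN].
  destruct (HN N (le_n _)) as [Hin Hout].
  destruct (Hout z Zz) as [z' [Zz' Hz']]. destruct (Hout w Zw) as [w' [Zw' Hw']].
  pose proof (d_tri Hm z' z w'). pose proof (d_tri Hm z w w'). rewrite (d_sym Hm z' z) in H.
  destruct (chain_shadow _ Zinf eta eta _ _ (geodesic_chain (Zn N) z' w' eta (Hgeod N) Zz' Zw'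
             ltac:(unfold eta; lra)) ltac:(intros u [Hu _]; apply Hin, Hu))
    as [p' [q' [Hp' [Hq' Hc]]]].
  set (T := fun u => Zinf u /\ d z u < r + e).
  assert (Hzp : d z p' < 2 * eta) by (pose proof (d_tri Hm z z' p'); lra).
  assert (Hwq : d w q' < 2 * eta).
  { pose proof (d_tri Hm w w' q'). lra. }
  assert (HT : forall v, (Zinf v /\ exists u, (Zn N u /\ d z' u <= d z' w') /\ d u v < eta) -> T v).
  { intros v [Zv [u [[_ Hu] Huv]]]. split; auto.
    pose proof (d_tri Hm z z' u). pose proof (d_tri Hm z u v). unfold eta in *. lra. }
  assert (HTz : T z) by (split; auto; rewrite (d_refl Hm); pose proof (d_nonneg Hm z w); lra).
  destruct (chain_endpoints Hc) as [Pp Pq].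
  apply chain_app with p'; [apply chain_step; [exact HTz|apply HT, Pp|unfold eta in *; lra]|].
  apply chain_app with q'.
  - eapply (chain_mono _ _ _ _ _ _ HT); [|exact Hc]. unfold eta; lra.
  - apply chain_step; [apply HT, Pq|split; [exact Zw|lra]|].
    rewrite (d_sym Hm). unfold eta in *. lra.
Qed.

End Chains.

Section AvoidingChains.
Context {Z : Type} {d : Z -> Z -> R} (Hm : is_metric d).
Variables (Zinf : Z -> Prop) (x0 : Z).
Hypothesis HZinfc : is_compact d Zinf.
Hypothesis Hconn : connected d (fun z => Zinf z /\ z <> x0).
Hypothesis Hcg : chain_geodesic d Zinf.

Let avoiding (rho : R) (z : Z) : Prop := Zinf z /\ rho <= d z x0.

Let linked (p q : Z) : Prop :=
  exists rho, 0 < rho /\ forall e, 0 < e -> chain_in d (avoiding rho) e p q.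

Lemma avoiding_mono rho rho' z : rho' <= rho -> avoiding rho z -> avoiding rho' z.
Proof. intros H [Zz Hz]. split; [exact Zz|lra]. Qed.

Lemma local_avoiding_chain z w e : Zinf z -> z <> x0 -> Zinf w -> d z w < d z x0 / 3 -> 0 < e ->
  chain_in d (avoiding (d z x0 / 3)) e z w.
Proof.
  intros Zz Hz Zw Hzw He. pose proof (d_pos Hm Hz) as Hp.
  assert (Hmin : 0 < Rmin e (d z x0 / 3)) by (apply Rmin_glb_lt; lra).
  generalize (Hcg z w (d z x0 / 3) _ Zz Zw Hzw Hmin). apply chain_mono; [|apply Rmin_l].
  intros u [Zu Hu]. split; [exact Zu|].
  pose proof (Rmin_r e (d z x0 / 3)). pose proof (d_tri Hm z u x0). lra.
Qed.

Lemma linked_local z w : Zinf z -> z <> x0 -> Zinf w -> d z w < d z x0 / 3 -> linked z w.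
Proof.
  intros. exists (d z x0 / 3). pose proof (d_pos Hm H0). split; [lra|].
  intros e He. apply local_avoiding_chain; auto.
Qed.

Lemma linked_refl p : Zinf p -> p <> x0 -> linked p p.
Proof.
  intros Zp Hp. apply linked_local; auto. rewrite (d_refl Hm). pose proof (d_pos Hm Hp). lra.
Qed.

Lemma linked_sym p q : linked p q -> linked q p.
Proof. intros [rho [Hr H]]. exists rho. split; auto. intros e He. apply (chain_rev Hm); auto. Qed.

Lemma linked_trans p q r : linked p q -> linked q r -> linked p r.
Proof.
  intros [r1 [H1 C1]] [r2 [H2 C2]]. exists (Rmin r1 r2). split; [apply Rmin_glb_lt; auto|].
  intros e He. apply chain_app with q.
  - apply (chain_mono (avoiding r1) _ e); auto; [|lra].
    intros z. apply avoiding_mono, Rmin_l.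
  - apply (chain_mono (avoiding r2) _ e); auto; [|lra].
    intros z. apply avoiding_mono, Rmin_r.
Qed.

(* The linking classes are open, so connectedness leaves only one. *)
Lemma linked_all p q : Zinf p -> p <> x0 -> Zinf q -> q <> x0 -> linked p q.
Proof.
  intros Zp Hp Zq Hq. apply NNPP; intro Hn. apply Hconn.
  set (near := fun (P : Z -> Prop) x => exists z, Zinf z /\ z <> x0 /\ P z /\ d z x < d z x0 / 3).
  assert (Hopen : forall P, is_open d (near P)).
  { intros P x [z [Zz [Hz [Pz Hx]]]]. exists (d z x0 / 3 - d z x). split; [lra|].
    intros y Hy. exists z. repeat split; auto. pose proof (d_tri Hm z x y). lra. }
  assert (Hself : forall (P : Z -> Prop) x, Zinf x -> x <> x0 -> P x -> near P x).
  { intros P x Zx Hx Px. exists x. repeat split; auto.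
    rewrite (d_refl Hm). pose proof (d_pos Hm Hx). lra. }
  exists (near (linked p)), (near (fun z => ~ linked p z)).
  split; [apply Hopen|split; [apply Hopen|split; [|split; [|split]]]].
  - intros x [Zx Hx]. destruct (classic (linked p x)); [left|right]; apply Hself; auto.
  - exists p. split; [split; auto|]. apply Hself; auto. apply linked_refl; auto.
  - exists q. split; [split; auto|]. apply Hself; auto.
  - intros x [Zx Hx] [z1 [Z1 [H1 [R1 D1]]]] [z2 [Z2 [H2 [R2 D2]]]]. apply R2.
    apply linked_trans with x; [apply linked_trans with z1; auto; apply linked_local; auto|].
    apply linked_sym, linked_local; auto.
Qed.

Lemma uniform_linked_from p0 r0 : Zinf p0 -> p0 <> x0 -> 0 < r0 ->
  exists rho, 0 < rho /\ forall p, Zinf p -> r0 <= d p x0 -> forall e, 0 < e ->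
    chain_in d (avoiding rho) e p0 p.
Proof.
  intros Zp0 Hp0x Hr0.
  set (P := fun '(z, rho) => Zinf z /\ z <> x0 /\ 0 < rho /\
                             forall e, 0 < e -> chain_in d (avoiding rho) e p0 z).
  destruct (HZinfc (option (Z * R)) (fun i w => match i with None => d x0 w < r0
     | Some (z, rho) => d z w < d z x0 / 3 /\ P (z, rho) end)) as [l Hl].
  - intros [[z rho]|]; [|apply (open_ball Hm)].
    destruct (classic (P (z, rho))) as [Pi|Pi]; [|intros w [_ Hw]; tauto].
    intros w [Hw _]. destruct (open_ball Hm z _ w Hw) as [e [He Hb]].
    exists e. split; [exact He|]. intros u Hu. split; [apply Hb; exact Hu|exact Pi].
  - intros w Zw. destruct (Rlt_dec (d x0 w) r0) as [H|H]; [exists None; auto|].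
    assert (Hw : w <> x0) by (intros ->; rewrite (d_refl Hm) in H; lra).
    destruct (linked_all p0 w Zp0 Hp0x Zw Hw) as [rho [Hrho Hc]].
    exists (Some (w, rho)). rewrite (d_refl Hm). pose proof (d_pos Hm Hw).
    split; [lra|]. repeat split; auto.
  - set (v := fun i => match i with
       | Some (z, rho) => if excluded_middle_informative (P (z, rho))
                          then Rmin rho (d z x0 / 3) else 1
       | None => 1 end).
    exists (fold_right (fun i acc => Rmin (v i) acc) 1 l). split.
    { apply fold_min_pos. intros [[z r]|] _; simpl; [|lra].
      destruct excluded_middle_informative as [[_ [Hz [Hr _]]]|_]; [|lra].
      apply Rmin_glb_lt; auto. pose proof (d_pos Hm Hz). lra. }
    intros p Zp Hp e He. destruct (Hl p Zp) as [[[z r]|] [Hin Hi]].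
    2:{ rewrite (d_sym Hm) in Hi. lra. }
    destruct Hi as [Hd Pi]. pose proof (fold_min_le v l _ Hin) as Hle.
    simpl in Hle. destruct excluded_middle_informative as [_|]; [|tauto].
    destruct Pi as [Zi [Hix [Hsi Hci]]].
    apply chain_app with z.
    + apply (chain_mono (avoiding r) _ e); auto; [|lra].
      intro u. apply avoiding_mono. eapply Rle_trans; [exact Hle|apply Rmin_l].
    + apply (chain_mono (avoiding (d z x0 / 3)) _ e); [|lra|apply local_avoiding_chain; auto].
      intro u. apply avoiding_mono. eapply Rle_trans; [exact Hle|apply Rmin_r].
Qed.

Lemma uniform_avoiding_chain r0 : 0 < r0 -> exists rho, 0 < rho /\ forall p q, Zinf p -> Zinf q ->
  r0 <= d p x0 -> r0 <= d q x0 -> forall e, 0 < e -> chain_in d (avoiding rho) e p q.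
Proof.
  intros Hr0.
  destruct (classic (exists p0, Zinf p0 /\ r0 <= d p0 x0)) as [[p0 [Zp0 Hp0]]|Hne].
  2:{ exists 1. split; [lra|]. intros p q Zp _ Hp. exfalso. eauto. }
  assert (Hp0x : p0 <> x0) by (intros ->; rewrite (d_refl Hm) in Hp0; lra).
  destruct (uniform_linked_from p0 r0 Zp0 Hp0x Hr0) as [rho [Hrho Hreach]].
  exists rho. split; auto. intros p q Zp Zq Hp Hq e He.
  apply chain_app with p0; [apply (chain_rev Hm)|]; apply Hreach; auto.
Qed.

End AvoidingChains.

(** * Shrinking of the pieces *)

Section Main.
Context {Z : Type} {d : Z -> Z -> R}.
Hypothesis Hmetric : is_metric d.
Hypothesis HZ : is_compact d (fun _ => True).
Variable X : nat -> Z -> Prop.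
Variable Y : nat -> nat -> Z -> Prop.
Variable y : nat -> nat -> Z.
Variable Zinf : Z -> Prop.
Variable mu : nat -> (Z -> Prop) -> R.
Variable muinf : (Z -> Prop) -> R.
Hypothesis HXc : forall n, is_compact d (X n).
Hypothesis HYc : forall n i, is_compact d (Y n i).
Hypothesis HYdisj : forall n i j z, i <> j -> Y n i z -> Y n j z -> False.
Hypothesis Hy : forall n i, (exists z, Y n i z) -> Y n i (y n i) /\ X n (y n i).
Hypothesis HZnc : forall n, is_compact d (fun z => X n z \/ exists i, Y n i z).
Hypothesis Hmu : forall n, finite_borel_measure d (mu n).
Hypothesis HmuZn : forall n, mu n (fun z => ~ (X n z \/ exists i, Y n i z)) = 0.
Hypothesis Hmuinf : finite_borel_measure d muinf.
Hypothesis HZinfc : is_compact d Zinf.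
Hypothesis HH : hausdorff_cv d (fun n z => X n z \/ exists i, Y n i z) Zinf.
Hypothesis Hgeod : forall n, geodesic d (fun z => X n z \/ exists i, Y n i z).
Hypothesis H2c : two_connected d Zinf.
Hypothesis HP : prokhorov_cv d mu muinf.
Hypothesis Hdiff : diffuse muinf.
Hypothesis HdiamXY : forall eps, 0 < eps -> exists N, forall n, (N <= n)%nat ->
      forall i, diam_le d (fun z => X n z /\ Y n i z) eps.
Hypothesis Hliminf : Rbar_lt (Finite 0) (LimInf_seq (fun n => mu n (X n))).

Let Zn n z := X n z \/ exists i, Y n i z.

Lemma mass_X_lower_bound : exists m0 N, 0 < m0 /\ forall n, (N <= n)%nat -> m0 < mu n (X n).
Proof.
  revert Hliminf. unfold LimInf_seq. destruct (ex_LimInf_seq (fun n => mu n (X n))) as [[l| |] Hl];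
    simpl; intro Hlt; [|exists 1; destruct (Hl 1) as [N HN]; exists N; split; [lra|auto]|tauto].
  destruct (Hl (mkposreal (l/2) ltac:(lra))) as [_ [N HN]]. exists (l/2), N. split; [lra|].
  intros n Hn. specialize (HN n Hn). simpl in HN. lra.
Qed.

(* Prokhorov convergence puts a fixed mass near X n, so X n cannot sit inside a ball of small
   muinf-measure. *)
Lemma X_leaves_small_ball m0 N0 : (forall n, (N0 <= n)%nat -> m0 < mu n (X n)) ->
  forall x r, 0 < r -> muinf (fun z => d x z < r) < m0 / 3 ->
  exists N, forall n, (N <= n)%nat -> exists b, X n b /\ r / 2 < d b x.
Proof.
  intros Hmass x r Hr Hball.
  assert (Hm0 : 0 < m0).
  { pose proof (measure_nonneg Hmuinf (borel_open (open_ball Hmetric x r))).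
    specialize (Hmass N0 (le_n _)). lra. }
  set (e := Rmin (r/2) (m0/3)).
  assert (He : 0 < e) by (apply Rmin_glb_lt; lra).
  pose proof (Rmin_l (r/2) (m0/3)). pose proof (Rmin_r (r/2) (m0/3)). fold e in H, H0.
  destruct (HP e He) as [N HN]. exists (N0 + N)%nat. intros n Hn. apply NNPP; intro Hno.
  destruct (HN n ltac:(lia) (X n) (borel_compact Hmetric (HXc n))) as [Hle _].
  assert (muinf (nbhd d (X n) e) <= muinf (fun z => d x z < r)).
  { apply (measure_mono Hmuinf); [apply borel_open, (open_nbhd Hmetric)|apply borel_open, (open_ball Hmetric)|].
    intros z [a [Xa Hza]]. assert (d a x <= r / 2) by (apply Rnot_lt_le; intro; apply Hno; eauto).
    pose proof (d_tri Hmetric x a z). rewrite (d_sym Hmetric x a), (d_sym Hmetric a z) in H2. lra. }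
  specialize (Hmass n ltac:(lia)). lra.
Qed.

Lemma large_Y_cluster :
  ~ (forall eps, 0 < eps -> exists N, forall n, (N <= n)%nat -> forall i, diam_le d (Y n i) eps) ->
  exists eps x0, 0 < eps /\ Zinf x0 /\ forall th N, 0 < th -> exists n i a b,
    (N <= n)%nat /\ Y n i a /\ Y n i b /\ eps < d a b /\ d x0 (y n i) < th.
Proof.
  intro Hn.
  assert (Hbig : exists eps, 0 < eps /\
      forall N, exists n i a b, (N <= n)%nat /\ Y n i a /\ Y n i b /\ eps < d a b).
  { apply NNPP; intro H1. apply Hn. intros eps Heps. apply NNPP; intro H2. apply H1.
    exists eps. split; auto. intro N. apply NNPP; intro H3. apply H2. exists N.
    intros n Hnn i a b Ya Yb. apply Rnot_lt_le. intro H4. apply H3. exists n, i, a, b. auto. }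
  destruct Hbig as [eps [Heps Hbig]].
  destruct (@compact_cluster _ _ Hmetric _
     (fun n u => exists i a b, Y n i a /\ Y n i b /\ eps < d a b /\ u = y n i) HZ) as [x0 [_ Hx0]].
  { intro N. destruct (Hbig N) as [n [i [a [b H]]]]. exists n, (y n i). split; [tauto|].
    split; [exists i, a, b; tauto|exact I]. }
  exists eps, x0. split; [exact Heps|split].
  - apply (compact_closed Hmetric HZinfc). intros e He.
    destruct (HH (e/2) ltac:(lra)) as [N HN].
    destruct (Hx0 (e/2) ltac:(lra) N) as [n [u [Hnn [[i [a [b [Ya [Yb [_ ->]]]]]] Hu]]]].
    destruct (proj1 (HN n Hnn) (y n i)) as [w [Zw Hw]].
    { left. apply (Hy n i). eauto. }
    exists w. split; auto. pose proof (d_tri Hmetric x0 (y n i) w). lra.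
  - intros th N Hth. destruct (Hx0 th Hth N) as [n [u [Hn' [[i [a [b [Ya [Yb [Hab ->]]]]]] Hu]]]].
    exists n, i, a, b. auto.
Qed.

Lemma Y_exit n i w b : Y n i w -> Zn n b ->
  Y n i b \/ exists pt, X n pt /\ Y n i pt /\ d w pt <= d w b /\ d pt b <= d w b.
Proof.
  intros Yw Zb. destruct (classic (Y n i b)) as [Yb|Nb]; [left; exact Yb|right].
  destruct (geodesic_exit Hmetric (X n) (Y n) (compact_closed Hmetric (HXc n))
      (fun j => compact_closed Hmetric (HYc n j)) (HYdisj n) (Hgeod n) i w b Yw Zb Nb)
    as [pt [Xpt [Ypt Hpt]]].
  exists pt. pose proof (d_nonneg Hmetric w pt). pose proof (d_nonneg Hmetric pt b).
  repeat split; auto; lra.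
Qed.

Section Confinement.
Variables (n i : nat) (x0 : Z) (th : R).
Hypothesis Hnear : forall u, Zinf u -> exists a, Zn n a /\ d u a < th.
Hypothesis Hcore : forall pt, X n pt -> Y n i pt -> d pt x0 <= 2 * th.

(* Leaving the th-neighbourhood of Y n i in one small step would force passing through
   X n ∩ Y n i, which is close to x0. *)
Lemma chain_stays_near_Y rho p q : 6 * th <= rho ->
  chain_in d (fun z => Zinf z /\ rho <= d z x0) th p q ->
  (exists w, Y n i w /\ d p w < th) -> exists w, Y n i w /\ d q w < th.
Proof.
  intros Hrho. apply (chain_invariant _ (fun u => exists w, Y n i w /\ d u w < th)).
  intros u u' [_ Hu] [Zu' _] Huu' [w [Yw Hw]].
  destruct (Hnear u' Zu') as [a [Za Ha]].
  destruct (Y_exit n i w a Yw Za) as [Ya|[pt [Xpt [Ypt [Hwpt _]]]]]; [exists a; auto|].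
  exfalso. pose proof (Hcore pt Xpt Ypt).
  pose proof (d_tri Hmetric w u a). pose proof (d_tri Hmetric u u' a).
  pose proof (d_tri Hmetric u w x0). pose proof (d_tri Hmetric w pt x0).
  rewrite (d_sym Hmetric w u) in H0. lra.
Qed.

Lemma X_near_Y_near_core b w : X n b -> Y n i w -> d b x0 <= d w b + 2 * th.
Proof.
  intros Xb Yw. destruct (Y_exit n i w b Yw (or_introl Xb)) as [Yb|[pt [Xpt [Ypt [_ Hpt]]]]].
  - pose proof (Hcore b Xb Yb). pose proof (d_nonneg Hmetric w b). lra.
  - pose proof (Hcore pt Xpt Ypt). pose proof (d_tri Hmetric b pt x0).
    rewrite (d_sym Hmetric b pt) in H0. lra.
Qed.

End Confinement.

Lemma Y_small_near x0 eps r : Zinf x0 -> 0 < eps -> 0 < r ->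
  (exists N, forall n, (N <= n)%nat -> exists b, X n b /\ r / 2 < d b x0) ->
  exists th N, 0 < th /\ forall n i a a', (N <= n)%nat -> Y n i a -> Y n i a' ->
    d x0 (y n i) < th -> d a a' <= eps.
Proof.
  intros Zx0 Heps Hr [Nfar Hfar].
  set (r0 := Rmin (eps/4) (r/4)).
  assert (Hr0 : 0 < r0) by (apply Rmin_glb_lt; lra).
  assert (Hr0e : r0 <= eps/4) by apply Rmin_l. assert (Hr0r : r0 <= r/4) by apply Rmin_r.
  destruct (uniform_avoiding_chain Hmetric Zinf x0 HZinfc (H2c x0 Zx0)
      (hausdorff_limit_chain_geodesic Hmetric _ _ Hgeod HH) r0 Hr0) as [rho [Hrho Hunif]].
  set (th := Rmin (rho/6) (Rmin (eps/8) (r/8))).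
  assert (Hth : 0 < th) by (apply Rmin_glb_lt; [lra|apply Rmin_glb_lt; lra]).
  assert (Hth1 : th <= rho/6) by apply Rmin_l.
  assert (Hth2 : th <= eps/8) by (eapply Rle_trans; [apply Rmin_r|apply Rmin_l]).
  assert (Hth3 : th <= r/8) by (eapply Rle_trans; [apply Rmin_r|apply Rmin_r]).
  destruct (HH th Hth) as [NH HNH]. destruct (HdiamXY th Hth) as [Nd HNd].
  exists th, (Nfar + NH + Nd)%nat. split; [exact Hth|].
  intros n i a a' Hnn Ya Ya' Hc. apply Rnot_lt_le. intro Haa'.
  destruct (Hy n i (ex_intro _ a Ya)) as [Yc Xc].
  destruct (HNH n ltac:(lia)) as [Hin Hout].
  assert (Hcore : forall pt, X n pt -> Y n i pt -> d pt x0 <= 2 * th).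
  { intros pt Xpt Ypt. pose proof (HNd n ltac:(lia) i pt (y n i) (conj Xpt Ypt) (conj Xc Yc)).
    pose proof (d_tri Hmetric pt (y n i) x0) as T. rewrite (d_sym Hmetric (y n i) x0) in T. lra. }
  assert (Ha1 : exists a1, Y n i a1 /\ eps/2 < d (y n i) a1).
  { destruct (Rlt_dec (eps/2) (d (y n i) a)) as [H1|H1]; [exists a; auto|].
    exists a'. split; auto. pose proof (d_tri Hmetric a (y n i) a') as T.
    rewrite (d_sym Hmetric a (y n i)) in T. lra. }
  destruct Ha1 as [a1 [Ya1 Ha1]].
  destruct (Hin a1 (or_intror (ex_intro _ i Ya1))) as [p [Zp Hp]].
  destruct (Hfar n ltac:(lia)) as [b [Xb Hb]].
  destruct (Hin b (or_introl Xb)) as [q [Zq Hq]].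
  assert (Hp0 : r0 <= d p x0).
  { pose proof (d_tri Hmetric (y n i) x0 a1) as T1. pose proof (d_tri Hmetric x0 p a1) as T2.
    rewrite (d_sym Hmetric (y n i) x0) in T1. rewrite (d_sym Hmetric x0 p), (d_sym Hmetric p a1) in T2.
    lra. }
  assert (Hq0 : r0 <= d q x0) by (pose proof (d_tri Hmetric b q x0); lra).
  destruct (chain_stays_near_Y n i x0 th Hout Hcore rho p q ltac:(lra)
      (Hunif p q Zp Zq Hp0 Hq0 th Hth)) as [w [Yw Hw]].
  { exists a1. split; auto. rewrite (d_sym Hmetric). exact Hp. }
  pose proof (X_near_Y_near_core n i x0 th Hcore b w Xb Yw).
  pose proof (d_tri Hmetric w q b) as T. rewrite (d_sym Hmetric w q), (d_sym Hmetric q b) in T. lra.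
Qed.

Lemma diam_Y_vanishes : forall eps, 0 < eps -> exists N, forall n, (N <= n)%nat ->
  forall i, diam_le d (Y n i) eps.
Proof.
  apply NNPP; intro Hn.
  destruct (large_Y_cluster Hn) as [eps [x0 [Heps [Zx0 Hx0]]]].
  destruct mass_X_lower_bound as [m0 [N0 [Hm0 HN0]]].
  destruct (small_ball_at Hmuinf Hmetric x0 (Hdiff x0) (m0/3) ltac:(lra)) as [r [Hr Hball]].
  destruct (Y_small_near x0 eps r Zx0 Heps Hr (X_leaves_small_ball m0 N0 HN0 x0 r Hr Hball))
    as [th [N [Hth Hsmall]]].
  destruct (Hx0 th N Hth) as [n [i [a [a' [Hnn [Ya [Ya' [Haa' Hc]]]]]]]].
  pose proof (Hsmall n i a a' Hnn Ya Ya' Hc). lra.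
Qed.

Lemma X_hausdorff_cv : hausdorff_cv d X Zinf.
Proof.
  intros eps Heps.
  destruct (HH (eps/2) ltac:(lra)) as [N1 HN1]. destruct (diam_Y_vanishes (eps/4) ltac:(lra)) as [N2 HN2].
  exists (N1 + N2)%nat. intros n Hn. destruct (HN1 n ltac:(lia)) as [H1 H2]. split.
  - intros a Xa. destruct (H1 a (or_introl Xa)) as [b [Zb Hb]]. exists b. split; auto. lra.
  - intros b Zb. destruct (H2 b Zb) as [a [[Xa|[i Ya]] Hab]]; [exists a; split; auto; lra|].
    destruct (Hy n i (ex_intro _ a Ya)) as [Yc Xc]. exists (y n i). split; auto.
    pose proof (HN2 n ltac:(lia) i a (y n i) Ya Yc). pose proof (d_tri Hmetric b a (y n i)). lra.
Qed.

Lemma borel_Y_minus_X n i : borel d (fun z => Y n i z /\ ~ X n z).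
Proof. apply borel_inter; [|apply borel_compl]; apply (borel_compact Hmetric); auto. Qed.

(* A point of Y n i lies within diam (Y n i) of y n i, whose small balls have small measure
   uniformly since muinf is diffuse. *)
Lemma gamma_vanishes : forall eps, 0 < eps -> exists N, forall n, (N <= n)%nat ->
  forall i, mu n (fun z => Y n i z /\ ~ X n z) <= eps.
Proof.
  intros eps Heps.
  destruct (small_ball_uniform Hmuinf Hmetric HZ Hdiff (eps/2) ltac:(lra)) as [r [Hr Hb]].
  set (e := Rmin (r/3) (eps/2)).
  assert (He : 0 < e) by (apply Rmin_glb_lt; lra).
  assert (Her : e <= r/3) by apply Rmin_l. assert (Hee : e <= eps/2) by apply Rmin_r.
  destruct (HP e He) as [N1 HN1]. destruct (diam_Y_vanishes (r/3) ltac:(lra)) as [N2 HN2].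
  exists (N1 + N2)%nat. intros n Hn i.
  assert (HYi : borel d (Y n i)) by apply (borel_compact Hmetric), HYc.
  assert (H1 : mu n (fun z => Y n i z /\ ~ X n z) <= mu n (Y n i)).
  { apply (measure_mono (Hmu n)); [apply borel_Y_minus_X|auto|tauto]. }
  destruct (HN1 n ltac:(lia) (Y n i) HYi) as [H2 _].
  assert (H3 : muinf (nbhd d (Y n i) e) <= muinf (fun z => d (y n i) z < r)).
  { apply (measure_mono Hmuinf); [apply borel_open, (open_nbhd Hmetric)|apply borel_open, (open_ball Hmetric)|].
    intros z [a [Ya Hza]]. destruct (Hy n i (ex_intro _ a Ya)) as [Yc _].
    pose proof (HN2 n ltac:(lia) i (y n i) a Yc Ya). pose proof (d_tri Hmetric (y n i) a z) as T.
    rewrite (d_sym Hmetric a z) in T. lra. }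
  specialize (Hb (y n i)). lra.
Qed.

(* mutilde n A is the mu n-measure of tilde n A: the mass of Y n i minus X n counts when
   y n i lies in A. *)
Let tilde n (A : Z -> Prop) z := (A z /\ X n z) \/ exists i, A (y n i) /\ Y n i z /\ ~ X n z.

Lemma borel_tilde n A : borel d A -> borel d (tilde n A).
Proof.
  intro HA. apply borel_union; [apply borel_inter; [auto|apply (borel_compact Hmetric), HXc]|].
  apply borel_cunion. intro i. apply borel_const_and, borel_Y_minus_X.
Qed.

Lemma mutilde_as_measure n A : borel d A ->
  mu n (fun z => A z /\ X n z) + Series (fun i => mu n (fun z => Y n i z /\ ~ X n z) * dirac (y n i) A) =
  mu n (tilde n A).
Proof.
  intro HA.
  assert (HE : forall i, mu n (fun z => Y n i z /\ ~ X n z) * dirac (y n i) A =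
                         mu n (fun z => A (y n i) /\ Y n i z /\ ~ X n z)).
  { intro i. unfold dirac. destruct excluded_middle_informative as [Ha|Ha].
    - rewrite Rmult_1_r. apply measure_ext. tauto.
    - rewrite Rmult_0_r. symmetry. apply (measure_empty (Hmu n)). tauto. }
  rewrite (Series_ext _ _ HE).
  rewrite (is_series_unique _ _ (measure_cunion (Hmu n) _
      (fun i => borel_const_and _ (borel_Y_minus_X n i))
      ltac:(intros j k z Hjk [_ [Hj _]] [_ [Hk _]]; eapply HYdisj; eauto))).
  symmetry. apply (measure_union (Hmu n)).
  - apply borel_inter; [auto|apply (borel_compact Hmetric), HXc].
  - apply borel_cunion. intro i. apply borel_const_and, borel_Y_minus_X.
  - intros z [_ Xz] [i [_ [_ NXz]]]. auto.
Qed.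

Lemma mutilde_prokhorov_cv : prokhorov_cv d
  (fun n (A : Z -> Prop) => mu n (fun z => A z /\ X n z) +
      Series (fun i => mu n (fun z => Y n i z /\ ~ X n z) * dirac (y n i) A)) muinf.
Proof.
  intros eps Heps.
  destruct (HP (eps/2) ltac:(lra)) as [N1 HN1]. destruct (diam_Y_vanishes (eps/4) ltac:(lra)) as [N2 HN2].
  exists (N1 + N2)%nat. intros n Hn A HA.
  assert (HAo : forall e, borel d (nbhd d A e)) by (intro; apply borel_open, (open_nbhd Hmetric)).
  rewrite !mutilde_as_measure; auto.
  destruct (HN1 n ltac:(lia) (nbhd d A (eps/2)) (HAo _)) as [H1 _].
  destruct (HN1 n ltac:(lia) A HA) as [_ H2].
  split.
  - assert (H3 : mu n (tilde n A) <= mu n (nbhd d A (eps/2))).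
    { apply (measure_mono (Hmu n)); [apply borel_tilde; auto|auto|].
      intros z [[Az _]|[i [Ay [Yz _]]]].
      - exists z. rewrite (d_refl Hmetric). split; auto. lra.
      - exists (y n i). split; auto. destruct (Hy n i (ex_intro _ z Yz)) as [Yc _].
        pose proof (HN2 n ltac:(lia) i z (y n i) Yz Yc). lra. }
    assert (H4 : muinf (nbhd d (nbhd d A (eps/2)) (eps/2)) <= muinf (nbhd d A eps)).
    { apply (measure_mono Hmuinf); [apply borel_open, (open_nbhd Hmetric)|apply HAo|].
      intros z [a [[b [Ab Hab]] Hza]]. exists b. split; auto.
      pose proof (d_tri Hmetric z a b). lra. }
    lra.
  - assert (H3 : mu n (nbhd d A (eps/2)) = mu n (fun z => nbhd d A (eps/2) z /\ Zn n z)).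
    { apply (measure_restrict (Hmu n)); auto. apply (borel_compact Hmetric), HZnc. }
    assert (H4 : mu n (fun z => nbhd d A (eps/2) z /\ Zn n z) <= mu n (tilde n (nbhd d A eps))).
    { apply (measure_mono (Hmu n)).
      - apply borel_inter; [auto|apply (borel_compact Hmetric), HZnc].
      - apply borel_tilde; auto.
      - intros z [[a [Aa Hza]] Hz]. destruct (classic (X n z)) as [Xz|NXz].
        + left. split; auto. exists a. split; auto. lra.
        + destruct Hz as [Xz|[i Yz]]; [tauto|]. right. exists i. split; [|auto].
          destruct (Hy n i (ex_intro _ z Yz)) as [Yc _]. exists a. split; auto.
          pose proof (HN2 n ltac:(lia) i (y n i) z Yc Yz). pose proof (d_tri Hmetric (y n i) z a). lra. }
    lra.
Qed.

End Main.

Theorem lemma2p2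
  (Z : Type) (d : Z -> Z -> R)
  (Hmetric : is_metric d) (HZ : is_compact d (fun _ => True))
  (X : nat -> Z -> Prop) (Y : nat -> nat -> Z -> Prop) (y : nat -> nat -> Z)
  (Zinf : Z -> Prop) (mu : nat -> (Z -> Prop) -> R) (muinf : (Z -> Prop) -> R)
  (* structure of Z_n = X_n  \cup  disjoint union of the Y_n^(i) *)
  (HXc : forall n, is_compact d (X n))
  (HXne : forall n, exists x, X n x)
  (HYc : forall n i, is_compact d (Y n i))
  (HYdisj : forall n i j z, i <> j -> Y n i z -> Y n j z -> False)
  (HYint : forall n i, (exists z, Y n i z) -> exists z, Y n i z /\ X n z)
  (Hy : forall n i, (exists z, Y n i z) -> Y n i (y n i) /\ X n (y n i))
  (HZnc : forall n, is_compact d (fun z => X n z \/ exists i, Y n i z))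
  (* measures *)
  (Hmu : forall n, finite_borel_measure d (mu n))
  (HmuZn : forall n, mu n (fun z => ~ (X n z \/ exists i, Y n i z)) = 0)
  (Hmuinf : finite_borel_measure d muinf)
  (* convergence and geometric assumptions *)
  (HZinfc : is_compact d Zinf)
  (HH : hausdorff_cv d (fun n z => X n z \/ exists i, Y n i z) Zinf)
  (Hgeod : forall n, geodesic d (fun z => X n z \/ exists i, Y n i z))
  (H2c : two_connected d Zinf)
  (HP : prokhorov_cv d mu muinf)
  (Hdiff : diffuse muinf)
  (HdiamXY : forall eps, 0 < eps -> exists N, forall n, (N <= n)%nat ->
      forall i, diam_le d (fun z => X n z /\ Y n i z) eps)
  (Hliminf : Rbar_lt (Finite 0) (LimInf_seq (fun n => mu n (X n)))) :
  let gamma := fun n i => mu n (fun z => Y n i z /\ ~ X n z) in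
  let mutilde := fun n (A : Z -> Prop) =>
      mu n (fun z => A z /\ X n z) + Series (fun i => gamma n i * dirac (y n i) A) in
  (forall eps, 0 < eps -> exists N, forall n, (N <= n)%nat ->
      forall i, diam_le d (Y n i) eps) /\
  hausdorff_cv d X Zinf /\
  prokhorov_cv d mutilde muinf /\
  (forall eps, 0 < eps -> exists N, forall n, (N <= n)%nat ->
      forall i, gamma n i <= eps).
Proof.
  intros gamma mutilde.
  split; [eapply diam_Y_vanishes; eassumption|].
  split; [eapply X_hausdorff_cv; eassumption|].
  split; [eapply mutilde_prokhorov_cv; eassumption|eapply gamma_vanishes; eassumption].
Qed.
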